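(* Let $n\ge3$, $1<k<n/2$, $p>\frac{nk}{n-2k}$, and let $u$ be a regular solution of (1.6). If $u(r)r^{\frac{2k}{p-k}}\to0$ as $r\to\infty$, then $u(r)=O(r^{\frac{2k-n}{k}})$ as $r\to\infty$.
   Context: Problem (1.6) is: given $\rho>0$, find $u$ with $-\tfrac{1}{k}C_{n-1}^{k-1}(r^{n-k}|u'|^{k-1}u')'=r^{n-1}u^{p}$, $u(r)>0$ for all $r>0$, $u'(0)=0$, $u(0)=\rho$, where $C_{n-1}^{k-1}$ is the binomial coefficient. A solution $u$ of (1.6) is regular if $x\mapsto u(|x|)$ belongs to $C^2(\mathbb{R}^n)$. *)

From Stdlib Require Import Reals Lra Lia.
Open Scope R_scope.

(* Points of R^n are represented as functions nat -> R; only the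
   coordinates 0..n-1 matter. *)
Fixpoint sumsq (n : nat) (x : nat -> R) : R :=
  match n with
  | O => 0
  | S m => sumsq m x + x m ^ 2
  end.

Definition nnorm (n : nat) (x : nat -> R) : R := sqrt (sumsq n x).

Definition shift (x : nat -> R) (i : nat) (t : R) : nat -> R :=
  fun j => if Nat.eqb j i then x j + t else x j.

Definition cont_Rn (n : nat) (f : (nat -> R) -> R) : Prop :=
  forall x eps, eps > 0 -> exists d, d > 0 /\
    forall y, nnorm n (fun j => y j - x j) < d -> Rabs (f y - f x) < eps.

Definition C2_Rn (n : nat) (f : (nat -> R) -> R) : Prop :=
  exists (g : nat -> (nat -> R) -> R) (h : nat -> nat -> (nat -> R) -> R),
    cont_Rn n f /\
    (forall i x, (i < n)%nat ->
        derivable_pt_lim (fun t => f (shift x i t)) 0 (g i x)) /\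
    (forall i, (i < n)%nat -> cont_Rn n (g i)) /\
    (forall i j x, (i < n)%nat -> (j < n)%nat ->
        derivable_pt_lim (fun t => g i (shift x j t)) 0 (h i j x)) /\
    (forall i j, (i < n)%nat -> (j < n)%nat -> cont_Rn n (h i j)).

(* u'(0) = 0, as a (right) derivative at the endpoint r = 0 of [0,oo) *)
Definition right_deriv_zero_at0 (u : R -> R) : Prop :=
  forall eps, eps > 0 -> exists d, d > 0 /\
    forall h, 0 < h < d -> Rabs ((u h - u 0) / h) < eps.

(* u solves problem (1.6) with parameter rho:
   -(1/k) C_{n-1}^{k-1} (r^{n-k} |u'|^{k-1} u')' = r^{n-1} u^p  for r > 0,
   u(r) > 0 for r > 0, u'(0) = 0, u(0) = rho. *)
Definition solves_1_6 (n k : nat) (p rho : R) (u : R -> R) : Prop :=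
  (exists u' : R -> R,
     (forall r, r > 0 -> derivable_pt_lim u r (u' r)) /\
     (forall r, r > 0 -> exists d,
        derivable_pt_lim
          (fun s => s ^ (n - k) * (Rabs (u' s)) ^ (k - 1) * u' s) r d /\
        - (1 / INR k) * C (n - 1) (k - 1) * d = r ^ (n - 1) * Rpower (u r) p)) /\
  (forall r, r > 0 -> u r > 0) /\
  right_deriv_zero_at0 u /\
  u 0 = rho.

Definition regular (n : nat) (u : R -> R) : Prop :=
  C2_Rn n (fun x => u (nnorm n x)).

(* Let [z = -r u'/u] be the logarithmic slope of [u], [bet = (n-2k)/k] and
   [a0 = 2k/(p-k) < bet]. The flux [r^(n-k) |u'|^(k-1) u'] decreases, so [u'] is
   eventually negative, and its monotonicity gives [z <= bet]. The rescaled flux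
   [Q = z^k] solves [r Q' = lam (u r^a0)^(p-k) - k Q (bet - z)], whose forcing term
   tends to [0] by hypothesis. This first keeps [z] above [a0/2], then drives [z]
   arbitrarily close to [bet]; hence [u] decays faster than [r^(-a0)], the forcing
   decays like a power of [r], and so does [bet - z]. Then [(bet - z)/r] is
   integrable and [u r^bet = exp (int (bet - z)/r)] stays bounded. *)

From Stdlib Require Import Reals Lra Lia Classical.
Open Scope R_scope.

Lemma Rpower_pos x y : 0 < Rpower x y.
Proof. apply exp_pos. Qed.

Lemma Rpower_minus_1 s a : 0 < s -> Rpower s (a - 1) = Rpower s a / s.
Proof.
  intro Hs. unfold Rminus. rewrite Rpower_plus, Rpower_Ropp, Rpower_1 by exact Hs.
  reflexivity.
Qed.

Lemma Rpower_pow_Rpower x c m : Rpower x c ^ m = Rpower x (c * INR m).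
Proof. rewrite <- Rpower_pow by apply Rpower_pos. apply Rpower_mult. Qed.

Lemma mul_Rpower_le x s a M : x * Rpower s a <= M -> x <= M * Rpower s (- a).
Proof.
  intro H. rewrite Rpower_Ropp. pose proof (Rpower_pos s a).
  apply Rmult_le_compat_r with (r := / Rpower s a) in H;
    [|left; apply Rinv_0_lt_compat; lra].
  replace (x * Rpower s a * / Rpower s a) with x in H by (field; lra). exact H.
Qed.

Lemma Rpower_unbounded a M : 0 < a -> exists S, 0 < S /\ forall s, S < s -> M < Rpower s a.
Proof.
  intro Ha. set (M1 := Rmax M 1).
  assert (HM1 : 0 < M1) by (unfold M1; pose proof (Rmax_r M 1); lra).
  assert (HMM1 : M <= M1) by apply Rmax_l.
  exists (exp (ln M1 / a)). split; [apply exp_pos|].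
  intros s Hs. assert (Hs0 : 0 < s) by (pose proof (exp_pos (ln M1 / a)); lra).
  apply ln_increasing in Hs; [|apply exp_pos]. rewrite ln_exp in Hs.
  assert (Hln : ln M1 < a * ln s).
  { apply Rmult_lt_compat_l with (r := a) in Hs; [|lra].
    replace (a * (ln M1 / a)) with (ln M1) in Hs by (field; lra). exact Hs. }
  apply exp_increasing in Hln. rewrite exp_ln in Hln by exact HM1.
  unfold Rpower. lra.
Qed.

Lemma Rpower_vanishes a eps : 0 < a -> 0 < eps ->
  exists S, 0 < S /\ forall s, S < s -> Rpower s (- a) < eps.
Proof.
  intros Ha He. destruct (Rpower_unbounded a (/ eps) Ha) as [S [HS Hlarge]].
  exists S. split; [exact HS|]. intros s Hs. rewrite Rpower_Ropp.
  specialize (Hlarge s Hs). rewrite <- (Rinv_inv eps).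
  apply Rinv_lt_contravar; [|exact Hlarge].
  apply Rmult_lt_0_compat; [apply Rinv_0_lt_compat; exact He|apply Rpower_pos].
Qed.

Lemma pow_le_reg a b m : 0 <= a -> 0 <= b -> (0 < m)%nat -> a ^ m <= b ^ m -> a <= b.
Proof.
  intros Ha Hb Hm H. apply Rnot_lt_le. intro Hba.
  assert (b ^ m < a ^ m); [|lra].
  destruct m as [|m]; [lia|]. clear Hm H. induction m as [|m IH].
  - simpl. lra.
  - change (b * b ^ S m < a * a ^ S m).
    assert (0 <= b ^ S m) by (apply pow_le; lra). nra.
Qed.

Lemma pow_sub_le b z m : 0 <= z <= b ->
  b ^ m - z ^ m <= INR m * b ^ Nat.pred m * (b - z).
Proof.
  intros Hzb. destruct m as [|m]; [simpl; lra|]. simpl Nat.pred.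
  induction m as [|m IH]; [simpl; lra|].
  rewrite S_INR. change (b * b ^ S m - z * z ^ S m <= (INR (S m) + 1) * (b * b ^ m) * (b - z)).
  assert (z ^ S m <= b ^ S m) by (apply pow_incr; lra).
  assert (0 <= b ^ m) by (apply pow_le; lra).
  change (b ^ S m) with (b * b ^ m) in *. nra.
Qed.

Lemma pow_sub_ge b z m : 0 <= z <= b ->
  INR m * z ^ Nat.pred m * (b - z) <= b ^ m - z ^ m.
Proof.
  intros Hzb. destruct m as [|m]; [simpl; lra|]. simpl Nat.pred.
  induction m as [|m IH]; [simpl; lra|].
  rewrite S_INR. change ((INR (S m) + 1) * (z * z ^ m) * (b - z) <= b * b ^ S m - z * z ^ S m).
  assert (z ^ S m <= b ^ S m) by (apply pow_incr; lra).
  assert (0 <= z ^ m) by (apply pow_le; lra).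
  assert (0 <= INR (S m)) by apply pos_INR.
  change (z ^ S m) with (z * z ^ m) in *. change (b ^ S m) with (b * b ^ m) in *. nra.
Qed.

Lemma derivable_pt_lim_eq f x a b : derivable_pt_lim f x a -> a = b -> derivable_pt_lim f x b.
Proof. intros H <-. exact H. Qed.

Lemma nonincreasing_of_deriv (f f' : R -> R) x y : x <= y ->
  (forall t, x <= t <= y -> derivable_pt_lim f t (f' t)) ->
  (forall t, x <= t <= y -> f' t <= 0) -> f y <= f x.
Proof.
  intros Hxy Hd Hs. destruct (Req_dec x y) as [->|Hne]; [lra|].
  destruct (MVT_cor2 f f' x y) as [c [Hc Hcxy]]; [lra|exact Hd|].
  assert (f' c <= 0) by (apply Hs; lra). nra.
Qed.

Lemma nondecreasing_of_deriv (f f' : R -> R) x y : x <= y ->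
  (forall t, x <= t <= y -> derivable_pt_lim f t (f' t)) ->
  (forall t, x <= t <= y -> 0 <= f' t) -> f x <= f y.
Proof.
  intros Hxy Hd Hs.
  assert (- f y <= - f x); [|lra].
  apply (nonincreasing_of_deriv (fun t => - f t) (fun t => - f' t) x y Hxy).
  - intros t Ht. apply derivable_pt_lim_opp, Hd, Ht.
  - intros t Ht. specialize (Hs t Ht). lra.
Qed.

Lemma derivable_pt_lim_near f t l : derivable_pt_lim f t l ->
  forall eps, 0 < eps -> exists del, 0 < del /\
    forall x, Rabs (x - t) < del -> Rabs (f x - f t) < eps.
Proof.
  intros Hd eps He.
  assert (Hc : continuity_pt f t) by (apply derivable_continuous_pt; exists l; exact Hd).
  destruct (Hc eps He) as [del [Hdel Hnear]]. exists del. split; [exact Hdel|].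
  intros x Hx. destruct (Req_dec x t) as [->|Hne].
  - rewrite Rminus_diag, Rabs_R0. exact He.
  - apply (Hnear x). split; [split; [exact I|congruence]|exact Hx].
Qed.

Lemma le_level_right_of_deriv (f : R -> R) t l c b : derivable_pt_lim f t l -> t < b ->
  f t < c \/ (f t = c /\ l < 0) -> exists x, t < x <= b /\ f x <= c.
Proof.
  intros Hl Htb [Hlt|[Heq Hneg]].
  - destruct (derivable_pt_lim_near f t l Hl (c - f t)) as [del [Hdel Hnear]]; [lra|].
    set (x := t + Rmin del (b - t) / 2).
    assert (0 < Rmin del (b - t) <= del) by (split; [apply Rmin_pos|apply Rmin_l]; lra).
    assert (Rmin del (b - t) <= b - t) by apply Rmin_r.
    assert (Hx : Rabs (x - t) < del) by (unfold x; rewrite Rabs_right; lra).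
    specialize (Hnear x Hx). apply Rabs_def2 in Hnear.
    exists x. unfold x in *. split; [split|]; lra.
  - destruct (Hl (- l / 2)) as [del Hdel]; [lra|].
    set (h := Rmin del (b - t) / 2).
    assert (0 < Rmin del (b - t) <= del)
      by (split; [apply Rmin_pos; [apply cond_pos|lra]|apply Rmin_l]).
    assert (Rmin del (b - t) <= b - t) by apply Rmin_r.
    assert (Hh : 0 < h) by (unfold h; lra).
    specialize (Hdel h ltac:(lra) ltac:(rewrite Rabs_right; unfold h in *; lra)).
    apply Rabs_def2 in Hdel.
    assert (Hq : (f (t + h) - f t) / h < 0) by lra.
    apply Rmult_lt_compat_r with (r := h) in Hq; [|exact Hh].
    replace ((f (t + h) - f t) / h * h) with (f (t + h) - f t) in Hq by (field; lra).
    exists (t + h). unfold h in *. split; [split|]; lra.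
Qed.

Lemma stays_below (f : R -> R) a c :
  (forall x, a <= x -> exists d, derivable_pt_lim f x d) ->
  f a <= c ->
  (forall x, a <= x -> f x = c -> exists d, derivable_pt_lim f x d /\ d < 0) ->
  forall b, a <= b -> f b <= c.
Proof.
  intros Hd Ha Hc b Hab. apply Rnot_lt_le. intro Hfb.
  set (E := fun x => a <= x <= b /\ f x <= c).
  destruct (completeness E) as [t [Hub Hlub]].
  { exists b. intros x [Hx _]. lra. }
  { exists a. split; [lra|exact Ha]. }
  assert (Hat : a <= t) by (apply Hub; split; [lra|exact Ha]).
  assert (Htb : t <= b) by (apply Hlub; intros x [Hx _]; lra).
  destruct (Rlt_or_le c (f t)) as [Hgt|Hle].
  - destruct (Hd t Hat) as [l Hl].
    destruct (derivable_pt_lim_near f t l Hl (f t - c)) as [del [Hdel Hnear]]; [lra|].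
    assert (t <= t - del / 2); [|lra].
    apply Hlub. intros x [Hx Hfx]. apply Rnot_lt_le. intro Hxt.
    assert (x <= t) by (apply Hub; split; assumption).
    assert (Hxd : Rabs (x - t) < del) by (rewrite Rabs_left1; lra).
    specialize (Hnear x Hxd). apply Rabs_def2 in Hnear. lra.
  - assert (Htb' : t < b) by (destruct (Req_dec t b) as [->|]; lra).
    destruct (Rle_lt_or_eq_dec _ _ Hle) as [Hlt|Heq].
    + destruct (Hd t Hat) as [l Hl].
      destruct (le_level_right_of_deriv f t l c b Hl Htb' (or_introl Hlt)) as [x [Hx Hfx]].
      assert (x <= t) by (apply Hub; split; [lra|exact Hfx]). lra.
    + destruct (Hc t Hat Heq) as [d [Hd' Hneg]].
      destruct (le_level_right_of_deriv f t d c b Hd' Htb' (or_intror (conj Heq Hneg)))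
        as [x [Hx Hfx]].
      assert (x <= t) by (apply Hub; split; [lra|exact Hfx]). lra.
Qed.

(* Integrating [(e s - B/c s^(-sig)) s^(-c)], which is nondecreasing, shows that
   any excess over [B/c r^(-sig)] would grow like [r^c]. *)
Lemma le_of_euler_ineq (e e' : R -> R) R0 E c B sig :
  0 < R0 -> 0 < c -> 0 <= B -> 0 <= sig ->
  (forall r, R0 < r -> derivable_pt_lim e r (e' r)) ->
  (forall r, R0 < r -> e r <= E) ->
  (forall r, R0 < r -> c * e r - B * Rpower r (- sig) <= r * e' r) ->
  forall r, R0 < r -> e r <= B / c * Rpower r (- sig).
Proof.
  intros HR Hc HB Hs Hd Hbnd Hineq t Ht.
  set (h := fun s => (e s - B / c * Rpower s (- sig)) * Rpower s (- c)).
  assert (Hmono : forall s, t <= s -> h t <= h s).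
  { intros s Hts.
    apply (nondecreasing_of_deriv h (fun s => Rpower s (- c) / s *
      ((s * e' s - (c * e s - B * Rpower s (- sig))) + B / c * sig * Rpower s (- sig))) t s Hts).
    - intros x Hx. eapply derivable_pt_lim_eq.
      + apply derivable_pt_lim_mult; [apply derivable_pt_lim_minus; [apply Hd; lra|]|];
          [apply derivable_pt_lim_scal|]; apply derivable_pt_lim_power; lra.
      + rewrite !Rpower_minus_1 by lra. field. split; lra.
    - intros x Hx. specialize (Hineq x ltac:(lra)).
      assert (0 <= B / c * sig * Rpower x (- sig)).
      { repeat apply Rmult_le_pos; try lra;
          [left; apply Rinv_0_lt_compat; lra|left; apply Rpower_pos]. }
      apply Rmult_le_pos; [|lra].
      apply Rmult_le_pos; [left; apply Rpower_pos|left; apply Rinv_0_lt_compat; lra]. }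
  apply Rnot_lt_le. intro Hgt.
  assert (Hht : 0 < h t) by (apply Rmult_lt_0_compat; [lra|apply Rpower_pos]).
  destruct (Rpower_unbounded c ((Rabs E + 1) / h t) Hc) as [S [HS Hlarge]].
  set (s := Rmax S t + 1).
  assert (HSs : S < s) by (unfold s; pose proof (Rmax_l S t); lra).
  assert (Hts : t <= s) by (unfold s; pose proof (Rmax_r S t); lra).
  specialize (Hmono s Hts). specialize (Hlarge s HSs). specialize (Hbnd s ltac:(lra)).
  assert (Hhs : h s * Rpower s c = e s - B / c * Rpower s (- sig)).
  { unfold h. rewrite Rmult_assoc, <- Rpower_plus, Rplus_opp_l, Rpower_O by lra. ring. }
  assert (Rabs E + 1 < h t * Rpower s c).
  { apply Rmult_lt_compat_l with (r := h t) in Hlarge; [|exact Hht].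
    replace (h t * ((Rabs E + 1) / h t)) with (Rabs E + 1) in Hlarge
      by (field; lra). exact Hlarge. }
  assert (h t * Rpower s c <= h s * Rpower s c)
    by (apply Rmult_le_compat_r; [left; apply Rpower_pos|exact Hmono]).
  assert (0 <= B / c * Rpower s (- sig)).
  { apply Rmult_le_pos; [apply Rmult_le_pos;
      [lra|left; apply Rinv_0_lt_compat; lra]|left; apply Rpower_pos]. }
  pose proof (Rle_abs E). lra.
Qed.

Definition log_slope (u u' : R -> R) (r : R) : R := - r * u' r / u r.

Lemma mul_Rpower_le_of_pow_mono (g : R -> R) (m k : nat) b r s :
  (0 < k)%nat -> 0 < r <= s -> 0 <= g r -> 0 <= g s -> INR m = b * INR k ->
  r ^ m * g r ^ k <= s ^ m * g s ^ k -> g r * Rpower r b * Rpower s (- b) <= g s.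
Proof.
  intros Hk Hrs Hgr Hgs Hm Hmono.
  apply (pow_le_reg _ _ k); [|exact Hgs|exact Hk|].
  { apply Rmult_le_pos; [apply Rmult_le_pos; [exact Hgr|]|]; left; apply Rpower_pos. }
  rewrite !Rpow_mult_distr, !Rpower_pow_Rpower, Ropp_mult_distr_l_reverse, <- Hm.
  rewrite Rpower_Ropp, !Rpower_pow by lra.
  assert (0 < s ^ m) by (apply pow_lt; lra).
  apply Rmult_le_reg_r with (r := s ^ m); [assumption|].
  replace (g r ^ k * r ^ m * / s ^ m * s ^ m) with (r ^ m * g r ^ k) by (field; lra). lra.
Qed.

(* Monotonicity of [s^m (-u' s)^k] gives [-u' s >= -u' r (r/s)^(bet+1)];
   integrating this from [r] to infinity against [u > 0] gives [u r >= r (-u' r) / bet]. *)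
Lemma log_slope_le_of_mono (u u' : R -> R) (m k : nat) bet R1 :
  0 <= R1 -> (0 < k)%nat -> 0 < bet -> INR m = (bet + 1) * INR k ->
  (forall r, R1 < r -> 0 < u r) ->
  (forall r, R1 < r -> u' r < 0) ->
  (forall r, R1 < r -> derivable_pt_lim u r (u' r)) ->
  (forall r s, R1 < r -> r <= s -> r ^ m * (- u' r) ^ k <= s ^ m * (- u' s) ^ k) ->
  forall r, R1 < r -> log_slope u u' r <= bet.
Proof.
  intros HR1 Hk Hb Hm Hu Hu' Hd Hmono r Hr.
  set (Y := - u' r). assert (HY : 0 < Y) by (unfold Y; specialize (Hu' r Hr); lra).
  assert (Hslope : forall s, r <= s -> Y * Rpower r (bet + 1) * Rpower s (- (bet + 1)) <= - u' s).
  { intros s Hs. specialize (Hu' s ltac:(lra)).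
    apply (mul_Rpower_le_of_pow_mono (fun s => - u' s) m k); cbv beta;
      [exact Hk|unfold Y in *; lra..|apply Hmono; lra]. }
  set (D := Y * Rpower r (bet + 1) / bet).
  set (psi := fun s => u s - D * Rpower s (- bet)).
  assert (Hpsi : forall s, r <= s -> psi s <= psi r).
  { intros s Hs.
    apply (nonincreasing_of_deriv psi (fun s => u' s - D * (- bet * Rpower s (- bet - 1))) r s Hs).
    - intros t Ht. apply derivable_pt_lim_minus; [apply Hd; lra|].
      apply derivable_pt_lim_scal, derivable_pt_lim_power. lra.
    - intros t Ht. specialize (Hslope t (proj1 Ht)). unfold D.
      replace (- bet - 1) with (- (bet + 1)) by ring.
      replace (u' t - Y * Rpower r (bet + 1) / bet * (- bet * Rpower t (- (bet + 1))))
        with (u' t + Y * Rpower r (bet + 1) * Rpower t (- (bet + 1))) by (field; lra). lra. }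
  assert (HD : 0 <= D).
  { unfold D. left. apply Rdiv_lt_0_compat; [apply Rmult_lt_0_compat; [lra|apply Rpower_pos]|lra]. }
  assert (Hpsi0 : 0 <= psi r).
  { apply Rnot_lt_le. intro Hneg.
    destruct (Rpower_vanishes bet (- psi r / (D + 1)) Hb) as [S [HS Hsmall]].
    { apply Rdiv_lt_0_compat; lra. }
    set (s := Rmax S r + 1).
    specialize (Hsmall s ltac:(unfold s; pose proof (Rmax_l S r); lra)).
    specialize (Hpsi s ltac:(unfold s; pose proof (Rmax_r S r); lra)).
    specialize (Hu s ltac:(unfold s; pose proof (Rmax_r S r); lra)).
    assert (D * Rpower s (- bet) <= D * (- psi r / (D + 1))) by (apply Rmult_le_compat_l; lra).
    assert (- psi r - D * (- psi r / (D + 1)) = - psi r / (D + 1)) by (field; lra).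
    assert (0 < - psi r / (D + 1)) by (apply Rdiv_lt_0_compat; lra).
    assert (u s - D * Rpower s (- bet) <= psi r) by exact Hpsi. lra. }
  assert (HDr : D * Rpower r (- bet) = Y * r / bet).
  { unfold D. replace (Y * Rpower r (bet + 1) / bet * Rpower r (- bet))
      with (Y * (Rpower r (bet + 1) * Rpower r (- bet)) / bet) by (field; lra).
    rewrite <- Rpower_plus. replace (bet + 1 + - bet) with 1 by ring.
    rewrite Rpower_1 by lra. ring. }
  unfold psi in Hpsi0. rewrite HDr in Hpsi0. specialize (Hu r Hr).
  unfold log_slope.
  apply Rmult_le_reg_r with (r := u r / bet); [apply Rdiv_lt_0_compat; lra|].
  replace (- r * u' r / u r * (u r / bet)) with (Y * r / bet) by (unfold Y; field; lra).
  replace (bet * (u r / bet)) with (u r) by (field; lra). lra.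
Qed.

Section Log_slope_asymptotics.

Variables (u u' Q : R -> R) (k : nat) (p bet a0 lam R1 : R).

Local Notation K := (INR k).
Local Notation z := (log_slope u u').

Let decay_term r := lam * Rpower (u r * Rpower r a0) (p - K).

Hypothesis k_pos : (0 < k)%nat.
Hypothesis R1_pos : 0 < R1.
Hypothesis a0_pos : 0 < a0.
Hypothesis a0_lt_bet : a0 < bet.
Hypothesis K_lt_p : K < p.
Hypothesis lam_pos : 0 < lam.
Hypothesis u_pos : forall r, R1 < r -> 0 < u r.
Hypothesis u'_neg : forall r, R1 < r -> u' r < 0.
Hypothesis u_deriv : forall r, R1 < r -> derivable_pt_lim u r (u' r).
Hypothesis Q_eq_pow : forall r, R1 < r -> Q r = z r ^ k.
Hypothesis Q_ode : forall r, R1 < r ->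
  derivable_pt_lim Q r ((decay_term r - K * Q r * (bet - z r)) / r).
Hypothesis log_slope_le_bet : forall r, R1 < r -> z r <= bet.
Hypothesis u_decay : forall eps, 0 < eps ->
  exists R0, forall r, R0 < r -> Rabs (u r * Rpower r a0) < eps.

Lemma K_pos : 0 < K.
Proof. apply lt_0_INR. exact k_pos. Qed.

Lemma log_slope_pos r : R1 < r -> 0 < z r.
Proof.
  intro Hr. unfold log_slope. specialize (u_pos r Hr). specialize (u'_neg r Hr).
  apply Rdiv_lt_0_compat; nra.
Qed.

Lemma u_Rpower_deriv c r : R1 < r ->
  derivable_pt_lim (fun y => u y * Rpower y c) r (Rpower r c / r * u r * (c - z r)).
Proof.
  intro Hr. eapply derivable_pt_lim_eq.
  - apply derivable_pt_lim_mult; [apply u_deriv, Hr|apply derivable_pt_lim_power; lra].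
  - specialize (u_pos r Hr). rewrite Rpower_minus_1 by lra. unfold log_slope. field. lra.
Qed.

Lemma u_Rpower_deriv_factor_pos c r : R1 < r -> 0 < Rpower r c / r * u r.
Proof.
  intro Hr. apply Rmult_lt_0_compat; [apply Rdiv_lt_0_compat; [apply Rpower_pos|lra]|].
  apply u_pos, Hr.
Qed.

Lemma u_Rpower_nondecreasing c x y : R1 < x -> x <= y ->
  (forall t, x <= t <= y -> z t <= c) -> u x * Rpower x c <= u y * Rpower y c.
Proof.
  intros Hx Hxy Hz. apply (nondecreasing_of_deriv (fun y => u y * Rpower y c)
    (fun t => Rpower t c / t * u t * (c - z t)) x y Hxy).
  - intros t Ht. apply u_Rpower_deriv. lra.
  - intros t Ht. specialize (Hz t Ht). pose proof (u_Rpower_deriv_factor_pos c t ltac:(lra)). nra.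
Qed.

Lemma u_Rpower_nonincreasing c x y : R1 < x -> x <= y ->
  (forall t, x <= t <= y -> c <= z t) -> u y * Rpower y c <= u x * Rpower x c.
Proof.
  intros Hx Hxy Hz. apply (nonincreasing_of_deriv (fun y => u y * Rpower y c)
    (fun t => Rpower t c / t * u t * (c - z t)) x y Hxy).
  - intros t Ht. apply u_Rpower_deriv. lra.
  - intros t Ht. specialize (Hz t Ht). pose proof (u_Rpower_deriv_factor_pos c t ltac:(lra)). nra.
Qed.

Lemma decay_term_vanishes eps : 0 < eps ->
  exists R, R1 <= R /\ forall r, R < r -> decay_term r < eps.
Proof.
  intro He. set (eta := Rpower (eps / lam) (/ (p - K))).
  destruct (u_decay eta (Rpower_pos _ _)) as [R0 HR0].
  exists (Rmax R1 R0). split; [apply Rmax_l|]. intros r Hr.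
  pose proof (Rmax_l R1 R0). pose proof (Rmax_r R1 R0).
  specialize (HR0 r ltac:(lra)).
  assert (Hx : 0 < u r * Rpower r a0)
    by (apply Rmult_lt_0_compat; [apply u_pos; lra|apply Rpower_pos]).
  rewrite Rabs_right in HR0 by lra.
  assert (Hpow : Rpower (u r * Rpower r a0) (p - K) < Rpower eta (p - K))
    by (apply Rlt_Rpower_l; lra).
  unfold eta in Hpow. rewrite Rpower_mult, Rinv_l, Rpower_1 in Hpow
    by (try apply Rdiv_lt_0_compat; lra).
  unfold decay_term. apply Rmult_lt_compat_l with (r := lam) in Hpow; [|exact lam_pos].
  replace (lam * (eps / lam)) with eps in Hpow by (field; lra). exact Hpow.
Qed.

(* At a time where [z = c] the equation for [Q = z^k] forces [Q' < 0],
   so [z] can never climb back above [c]. *)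
Lemma log_slope_trapped c R : 0 < c -> R1 <= R ->
  (forall r, R < r -> decay_term r < K * c ^ k * (bet - c)) ->
  forall r, R < r -> z r <= c -> forall x, r <= x -> z x <= c.
Proof.
  intros Hc HR Hdt r Hr Hzr x Hx.
  assert (HQ : Q x <= c ^ k).
  { apply (stays_below Q r (c ^ k)); [| | |exact Hx].
    - intros y Hy. eexists. apply Q_ode. lra.
    - rewrite Q_eq_pow by lra. apply pow_incr. pose proof (log_slope_pos r ltac:(lra)). lra.
    - intros y Hy HQy. eexists. split; [apply Q_ode; lra|].
      pose proof (log_slope_pos y ltac:(lra)). rewrite Q_eq_pow in HQy by lra.
      assert (Hzy : z y = c).
      { apply Rle_antisym; apply (pow_le_reg _ _ k); try lra; try exact k_pos; rewrite HQy; lra. }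
      rewrite Q_eq_pow, HQy, Hzy by lra. specialize (Hdt y ltac:(lra)).
      assert (0 < / y) by (apply Rinv_0_lt_compat; lra). unfold Rdiv. nra. }
  rewrite Q_eq_pow in HQ by lra.
  pose proof (log_slope_pos x ltac:(lra)).
  apply (pow_le_reg _ _ k); [lra|lra|exact k_pos|exact HQ].
Qed.

Lemma log_slope_eventually_gt c : 0 < c < a0 -> exists R, R1 <= R /\ forall r, R < r -> c < z r.
Proof.
  intro Hc.
  assert (Hgap : 0 < K * c ^ k * (bet - c)).
  { pose proof K_pos. apply Rmult_lt_0_compat; [apply Rmult_lt_0_compat;
      [lra|apply pow_lt; lra]|lra]. }
  destruct (decay_term_vanishes _ Hgap) as [R [HR Hdt]].
  exists R. split; [exact HR|]. intros r Hr. apply Rnot_le_lt. intro Hzr.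
  pose proof (log_slope_trapped c R ltac:(lra) HR Hdt r Hr Hzr) as Htrap.
  set (m := u r * Rpower r c).
  assert (Hm : 0 < m) by (apply Rmult_lt_0_compat; [apply u_pos; lra|apply Rpower_pos]).
  destruct (u_decay 1 Rlt_0_1) as [R0 HR0].
  destruct (Rpower_unbounded (a0 - c) (/ m) ltac:(lra)) as [S [HS Hlarge]].
  set (s := Rmax (Rmax R0 S) r + 1).
  pose proof (Rmax_l (Rmax R0 S) r). pose proof (Rmax_r (Rmax R0 S) r).
  pose proof (Rmax_l R0 S). pose proof (Rmax_r R0 S).
  specialize (HR0 s ltac:(unfold s; lra)). specialize (Hlarge s ltac:(unfold s; lra)).
  assert (Hmono : m <= u s * Rpower s c).
  { apply u_Rpower_nondecreasing; [lra|unfold s; lra|]. intros t Ht. apply Htrap. lra. }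
  assert (Hsplit : u s * Rpower s a0 = u s * Rpower s c * Rpower s (a0 - c)).
  { rewrite Rmult_assoc, <- Rpower_plus. f_equal. f_equal. ring. }
  rewrite Hsplit in HR0.
  assert (1 < u s * Rpower s c * Rpower s (a0 - c)).
  { replace 1 with (m * / m) by (field; lra).
    apply Rlt_le_trans with (m * Rpower s (a0 - c)).
    - apply Rmult_lt_compat_l; lra.
    - apply Rmult_le_compat_r; [left; apply Rpower_pos|lra]. }
  pose proof (Rle_abs (u s * Rpower s c * Rpower s (a0 - c))). lra.
Qed.

(* Once [z >= c > 0], the mean-value bound [bet^k - z^k <= k bet^(k-1) (bet - z)]
   turns the equation for [Q] into a linear differential inequality for the gap [bet^k - Q]. *)
Lemma gap_euler_ineq c r : 0 < c -> R1 < r -> c <= z r ->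
  c ^ k / bet ^ pred k * (bet ^ k - Q r) - decay_term r
  <= r * - ((decay_term r - K * Q r * (bet - z r)) / r).
Proof.
  intros Hc Hr Hcz.
  pose proof (log_slope_le_bet r Hr) as Hzb. pose proof K_pos.
  replace (r * - ((decay_term r - K * Q r * (bet - z r)) / r))
    with (K * Q r * (bet - z r) - decay_term r) by (field; lra).
  rewrite Q_eq_pow by exact Hr.
  assert (Hb : 0 < bet ^ pred k) by (apply pow_lt; lra).
  pose proof (pow_sub_le bet (z r) k ltac:(lra)) as Hmv.
  assert (c ^ k <= z r ^ k) by (apply pow_incr; lra).
  assert (Hck : 0 <= c ^ k / bet ^ pred k)
    by (apply Rmult_le_pos; [apply pow_le; lra|left; apply Rinv_0_lt_compat, Hb]).
  apply Rmult_le_compat_l with (r := c ^ k / bet ^ pred k) in Hmv; [|exact Hck].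
  replace (c ^ k / bet ^ pred k * (K * bet ^ pred k * (bet - z r)))
    with (K * c ^ k * (bet - z r)) in Hmv by (field; lra).
  assert (K * c ^ k * (bet - z r) <= K * z r ^ k * (bet - z r)).
  { apply Rmult_le_compat_r; [lra|]. apply Rmult_le_compat_l; lra. }
  lra.
Qed.

Let gap_rate := (a0 / 2) ^ k / bet ^ pred k.

Lemma gap_rate_pos : 0 < gap_rate.
Proof. apply Rdiv_lt_0_compat; apply pow_lt; lra. Qed.

Lemma gap_le_of_decay_term_le B sig R : 0 <= B -> 0 <= sig -> R1 <= R ->
  (forall r, R < r -> decay_term r <= B * Rpower r (- sig)) ->
  exists R', forall r, R' < r -> bet ^ k - Q r <= B / gap_rate * Rpower r (- sig).
Proof.
  intros HB Hsig HR Hdt.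
  destruct (log_slope_eventually_gt (a0 / 2) ltac:(lra)) as [R2 [HR2 Hz]].
  exists (Rmax R R2). pose proof (Rmax_l R R2). pose proof (Rmax_r R R2).
  apply (le_of_euler_ineq _ (fun r => - ((decay_term r - K * Q r * (bet - z r)) / r)) _ (bet ^ k));
    try lra; [apply gap_rate_pos| | |].
  - intros r Hr. eapply derivable_pt_lim_eq.
    + apply derivable_pt_lim_minus; [apply derivable_pt_lim_const|apply Q_ode; lra].
    + ring.
  - intros r Hr. rewrite Q_eq_pow by lra.
    pose proof (pow_le (z r) k ltac:(pose proof (log_slope_pos r ltac:(lra)); lra)). lra.
  - intros r Hr. specialize (Hdt r ltac:(lra)).
    pose proof (gap_euler_ineq (a0 / 2) r ltac:(lra) ltac:(lra) ltac:(left; apply Hz; lra)).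
    unfold gap_rate. lra.
Qed.

Lemma log_slope_eventually_gt_any c : 0 < c < bet ->
  exists R, forall r, R < r -> c < z r.
Proof.
  intro Hc. set (gap := bet ^ k - c ^ k).
  assert (Hgap : 0 < gap).
  { unfold gap. apply Rlt_0_minus, Rnot_le_lt. intro Hle.
    assert (bet <= c) by (apply (pow_le_reg _ _ k); try lra; exact k_pos). lra. }
  pose proof gap_rate_pos.
  destruct (decay_term_vanishes (gap_rate * gap / 2)) as [R [HR Hdt]].
  { apply Rdiv_lt_0_compat; [apply Rmult_lt_0_compat|]; lra. }
  destruct (gap_le_of_decay_term_le (gap_rate * gap / 2) 0 R) as [R' HR']; try lra.
  { apply Rmult_le_pos; [apply Rmult_le_pos|]; lra. }
  { intros r Hr. rewrite Ropp_0, Rpower_O by lra. specialize (Hdt r Hr). lra. }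
  exists (Rmax R' R1). intros r Hr. pose proof (Rmax_l R' R1). pose proof (Rmax_r R' R1).
  specialize (HR' r ltac:(lra)). rewrite Ropp_0, Rpower_O, Q_eq_pow in HR' by lra.
  replace (gap_rate * gap / 2 / gap_rate * 1) with (gap / 2) in HR' by (field; lra).
  apply Rnot_le_lt. intro Hzc.
  assert (z r ^ k <= c ^ k) by (apply pow_incr; pose proof (log_slope_pos r ltac:(lra)); lra).
  unfold gap in *. lra.
Qed.

Lemma u_eventually_le_Rpower c : 0 < c < bet ->
  exists A R, R1 <= R /\ forall s, R < s -> u s <= A * Rpower s (- c).
Proof.
  intro Hc. destruct (log_slope_eventually_gt_any c Hc) as [R HR].
  set (r := Rmax R R1 + 1). pose proof (Rmax_l R R1). pose proof (Rmax_r R R1).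
  exists (u r * Rpower r c), r. split; [unfold r; lra|]. intros s Hs.
  apply mul_Rpower_le, u_Rpower_nonincreasing; [unfold r; lra|lra|].
  intros t Ht. left. apply HR. unfold r in *. lra.
Qed.

Lemma decay_term_le_Rpower :
  exists B sig R, 0 <= B /\ 0 < sig /\ R1 <= R /\
    forall s, R < s -> decay_term s <= B * Rpower s (- sig).
Proof.
  set (c := (a0 + bet) / 2).
  destruct (u_eventually_le_Rpower c ltac:(unfold c; lra)) as [A [R [HR HA]]].
  exists (lam * Rpower A (p - K)), ((c - a0) * (p - K)), (R + 1).
  split; [apply Rmult_le_pos; [lra|left; apply Rpower_pos]|].
  split; [apply Rmult_lt_0_compat; unfold c; lra|].
  split; [lra|]. intros s Hs. unfold decay_term. rewrite Rmult_assoc.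
  apply Rmult_le_compat_l; [lra|].
  assert (Hus : 0 < u s) by (apply u_pos; lra).
  assert (HA0 : 0 < A).
  { specialize (HA s ltac:(lra)). pose proof (Rpower_pos s (- c)).
    apply Rmult_lt_reg_r with (Rpower s (- c)); lra. }
  replace (Rpower A (p - K) * Rpower s (- ((c - a0) * (p - K))))
    with (Rpower (A * Rpower s (a0 - c)) (p - K)).
  - apply Rle_Rpower_l; [lra|]. split; [apply Rmult_lt_0_compat; [lra|apply Rpower_pos]|].
    replace (A * Rpower s (a0 - c)) with (A * Rpower s (- c) * Rpower s a0).
    + apply Rmult_le_compat_r; [left; apply Rpower_pos|apply HA; lra].
    + rewrite Rmult_assoc, <- Rpower_plus. f_equal. f_equal. ring.
  - rewrite <- Rpower_mult_distr, Rpower_mult by (try apply Rpower_pos; lra).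
    f_equal. f_equal. ring.
Qed.

Lemma bet_sub_log_slope_le :
  exists E sig R, 0 <= E /\ 0 < sig /\ R1 <= R /\
    forall r, R < r -> bet - z r <= E * Rpower r (- sig).
Proof.
  destruct decay_term_le_Rpower as [B [sig [R [HB [Hsig [HR Hdt]]]]]].
  destruct (gap_le_of_decay_term_le B sig R HB ltac:(lra) HR Hdt) as [R' Hgap].
  destruct (log_slope_eventually_gt (a0 / 2) ltac:(lra)) as [R2 [HR2 Hz]].
  pose proof gap_rate_pos. pose proof K_pos.
  assert (Hc : 0 < K * (a0 / 2) ^ pred k) by (apply Rmult_lt_0_compat; [lra|apply pow_lt; lra]).
  exists (B / gap_rate / (K * (a0 / 2) ^ pred k)), sig, (Rmax (Rmax R' R2) R1).
  pose proof (Rmax_l (Rmax R' R2) R1). pose proof (Rmax_r (Rmax R' R2) R1).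
  pose proof (Rmax_l R' R2). pose proof (Rmax_r R' R2).
  split.
  { unfold Rdiv. repeat apply Rmult_le_pos; try lra; left; apply Rinv_0_lt_compat; lra. }
  split; [exact Hsig|]. split; [lra|]. intros r Hr.
  specialize (Hgap r ltac:(lra)). rewrite Q_eq_pow in Hgap by lra.
  specialize (Hz r ltac:(lra)). pose proof (log_slope_le_bet r ltac:(lra)).
  pose proof (pow_sub_ge bet (z r) k ltac:(lra)) as Hmv.
  assert ((a0 / 2) ^ pred k <= z r ^ pred k) by (apply pow_incr; lra).
  assert (K * (a0 / 2) ^ pred k * (bet - z r) <= K * z r ^ pred k * (bet - z r)).
  { apply Rmult_le_compat_r; [lra|]. apply Rmult_le_compat_l; lra. }
  apply Rmult_le_reg_l with (K * (a0 / 2) ^ pred k); [exact Hc|].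
  replace (K * (a0 / 2) ^ pred k * (B / gap_rate / (K * (a0 / 2) ^ pred k) * Rpower r (- sig)))
    with (B / gap_rate * Rpower r (- sig))
    by (pose proof (pow_lt (a0 / 2) (pred k) ltac:(lra)); field; lra).
  lra.
Qed.

(* [u r^bet exp((E/sig) r^(-sig))] is nonincreasing: the exponential factor
   absorbs the integrable defect [bet - z]. *)
Theorem u_le_Rpower_bet : exists M R, forall r, R < r -> u r <= M * Rpower r (- bet).
Proof.
  destruct bet_sub_log_slope_le as [E [sig [R [HE [Hsig [HR Hz]]]]]].
  set (corr := fun y => exp (E / sig * Rpower y (- sig))).
  set (phi := fun y => u y * Rpower y bet * corr y).
  set (r0 := R + 1).
  assert (Hphi : forall s, r0 <= s -> phi s <= phi r0).
  { intros s Hs. apply (nonincreasing_of_deriv phi (fun t => Rpower t bet / t * u t * corr t *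
      ((bet - z t) - E * Rpower t (- sig))) r0 s Hs).
    - intros t Ht. eapply derivable_pt_lim_eq.
      + apply derivable_pt_lim_mult; [apply u_Rpower_deriv; unfold r0 in *; lra|].
        apply (derivable_pt_lim_comp (fun y => E / sig * Rpower y (- sig)) exp).
        * apply derivable_pt_lim_scal, derivable_pt_lim_power. unfold r0 in *; lra.
        * apply derivable_pt_lim_exp.
      + unfold corr. rewrite Rpower_minus_1 by (unfold r0 in *; lra). field.
        unfold r0 in *. split; lra.
    - intros t Ht. specialize (Hz t ltac:(unfold r0 in *; lra)).
      pose proof (u_Rpower_deriv_factor_pos bet t ltac:(unfold r0 in *; lra)).
      assert (0 < Rpower t bet / t * u t * corr t)
        by (apply Rmult_lt_0_compat; [lra|apply exp_pos]).
      cbv beta. nra. }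
  exists (phi r0), r0. intros s Hs.
  specialize (Hphi s ltac:(lra)).
  assert (Hcorr : 1 <= corr s).
  { unfold corr. pose proof (exp_ineq1_le (E / sig * Rpower s (- sig))).
    assert (0 <= E / sig * Rpower s (- sig)).
    { apply Rmult_le_pos; [apply Rmult_le_pos;
        [lra|left; apply Rinv_0_lt_compat; lra]|left; apply Rpower_pos]. }
    lra. }
  apply mul_Rpower_le.
  assert (0 < u s * Rpower s bet)
    by (apply Rmult_lt_0_compat; [apply u_pos; unfold r0 in *; lra|apply Rpower_pos]).
  assert (u s * Rpower s bet * corr s <= phi r0) by exact Hphi. nra.
Qed.

End Log_slope_asymptotics.

Definition flux (n k : nat) (u' : R -> R) (s : R) : R :=
  s ^ (n - k) * Rabs (u' s) ^ (k - 1) * u' s.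

Definition rescaled_flux (n k : nat) (u u' : R -> R) (r : R) : R :=
  - flux n k u' r * Rpower r (2 * INR k - INR n) / u r ^ k.

Lemma C_pos n m : 0 < C n m.
Proof.
  apply Rdiv_lt_0_compat; [apply INR_fact_lt_0|].
  apply Rmult_lt_0_compat; apply INR_fact_lt_0.
Qed.

Lemma flux_deriv_of_solves n k p rho u : (0 < k)%nat -> solves_1_6 n k p rho u ->
  exists u', (forall r, 0 < r -> derivable_pt_lim u r (u' r)) /\
    forall r, 0 < r -> derivable_pt_lim (flux n k u') r
      (- (INR k / C (n - 1) (k - 1)) * r ^ (n - 1) * Rpower (u r) p).
Proof.
  intros Hk [[u' [Hu' Hw]] _]. exists u'. split; [exact Hu'|].
  intros r Hr. destruct (Hw r Hr) as [d [Hd Heq]].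
  pose proof (C_pos (n - 1) (k - 1)). assert (0 < INR k) by (apply lt_0_INR; exact Hk).
  assert (Hval : d = - (INR k / C (n - 1) (k - 1)) * (- (1 / INR k) * C (n - 1) (k - 1) * d))
    by (field; lra).
  rewrite Heq, <- Rmult_assoc in Hval. rewrite <- Hval. exact Hd.
Qed.

Lemma flux_eq_neg n k u' s : (0 < k)%nat -> u' s < 0 ->
  flux n k u' s = - (s ^ (n - k) * (- u' s) ^ k).
Proof.
  intros Hk Hs. unfold flux. rewrite Rabs_left by exact Hs.
  destruct k as [|j]; [lia|]. replace (S j - 1)%nat with j by lia. simpl. ring.
Qed.

Lemma flux_neg_iff n k u' s : (0 < k)%nat -> 0 < s -> flux n k u' s < 0 <-> u' s < 0.
Proof.
  intros Hk Hs. split; intro H.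
  - apply Rnot_le_lt. intro Hu. unfold flux in H.
    assert (0 <= s ^ (n - k) * Rabs (u' s) ^ (k - 1)).
    { apply Rmult_le_pos; apply pow_le; [lra|apply Rabs_pos]. }
    nra.
  - rewrite flux_eq_neg by assumption.
    assert (0 < s ^ (n - k) * (- u' s) ^ k) by (apply Rmult_lt_0_compat; apply pow_lt; lra). lra.
Qed.

Lemma vanishes_of_Rpower_weighted (u : R -> R) a : 0 <= a ->
  (forall eps, 0 < eps -> exists R0, forall r, R0 < r -> Rabs (u r * Rpower r a) < eps) ->
  forall eps, 0 < eps -> exists R0, forall r, R0 < r -> Rabs (u r) < eps.
Proof.
  intros Ha Hdec eps He. destruct (Hdec eps He) as [R0 HR0].
  exists (Rmax R0 1). intros r Hr. pose proof (Rmax_l R0 1). pose proof (Rmax_r R0 1).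
  specialize (HR0 r ltac:(lra)).
  assert (1 <= Rpower r a) by (rewrite <- (Rpower_O r) by lra; apply Rle_Rpower; lra).
  rewrite Rabs_mult, (Rabs_right (Rpower r a)) in HR0 by lra.
  pose proof (Rabs_pos (u r)). nra.
Qed.

(* Were [u' >= 0] everywhere, [u > 0] could not tend to [0]; and the flux is
   nonincreasing, so one negative value of [u'] makes [u'] negative from there on. *)
Lemma deriv_eventually_neg n k (u u' : R -> R) : (0 < k)%nat ->
  (forall r, 0 < r -> 0 < u r) ->
  (forall eps, 0 < eps -> exists R0, forall r, R0 < r -> Rabs (u r) < eps) ->
  (forall r, 0 < r -> derivable_pt_lim u r (u' r)) ->
  (forall x y, 0 < x -> x <= y -> flux n k u' y <= flux n k u' x) ->
  exists R1, 0 < R1 /\ forall r, R1 < r -> u' r < 0.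
Proof.
  intros Hk Hpos Hlim Hd Hmono.
  destruct (classic (exists r1, 0 < r1 /\ flux n k u' r1 < 0)) as [[r1 [Hr1 Hneg]]|Hnone].
  - exists r1. split; [exact Hr1|]. intros r Hr.
    apply (flux_neg_iff n k u' r Hk ltac:(lra)).
    specialize (Hmono r1 r Hr1 ltac:(lra)). lra.
  - exfalso. destruct (Hlim (u 1) (Hpos 1 Rlt_0_1)) as [R0 HR0].
    set (r := Rmax R0 1 + 1). pose proof (Rmax_l R0 1). pose proof (Rmax_r R0 1).
    assert (Hmon : u 1 <= u r).
    { apply (nondecreasing_of_deriv u u' 1 r); [unfold r; lra| |].
      - intros t Ht. apply Hd. lra.
      - intros t Ht. apply Rnot_lt_le. intro Hneg. apply Hnone. exists t.
        split; [lra|]. apply flux_neg_iff; [exact Hk|lra|exact Hneg]. }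
    specialize (HR0 r ltac:(unfold r; lra)). pose proof (Rle_abs (u r)). lra.
Qed.

Lemma rescaled_flux_eq_pow n k u u' r : (0 < k)%nat -> (k <= n)%nat -> 0 < r -> 0 < u r ->
  u' r < 0 ->
  rescaled_flux n k u u' r = log_slope u u' r ^ k.
Proof.
  intros Hk Hkn Hr Hu Hu'. unfold rescaled_flux, log_slope. rewrite flux_eq_neg by assumption.
  rewrite <- Rpower_pow by exact Hr. rewrite minus_INR by exact Hkn.
  replace (- - (Rpower r (INR n - INR k) * (- u' r) ^ k) * Rpower r (2 * INR k - INR n))
    with (Rpower r (INR n - INR k) * Rpower r (2 * INR k - INR n) * (- u' r) ^ k) by ring.
  rewrite <- Rpower_plus. replace (INR n - INR k + (2 * INR k - INR n)) with (INR k) by ring.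
  rewrite Rpower_pow by exact Hr.
  replace (- r * u' r / u r) with (r * (- u' r) * / u r) by (field; lra).
  rewrite !Rpow_mult_distr, pow_inv. field. apply pow_nonzero. lra.
Qed.

Lemma flux_nonincreasing n k p lam (u u' : R -> R) : 0 <= lam ->
  (forall r, 0 < r -> 0 < u r) ->
  (forall r, 0 < r -> derivable_pt_lim (flux n k u') r (- lam * r ^ (n - 1) * Rpower (u r) p)) ->
  forall x y, 0 < x -> x <= y -> flux n k u' y <= flux n k u' x.
Proof.
  intros Hlam Hpos Hd x y Hx Hxy.
  apply (nonincreasing_of_deriv _ (fun t => - lam * t ^ (n - 1) * Rpower (u t) p) x y Hxy).
  - intros t Ht. apply Hd. lra.
  - intros t Ht. assert (0 <= t ^ (n - 1) * Rpower (u t) p).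
    { apply Rmult_le_pos; [apply pow_le; lra|left; apply Rpower_pos]. }
    nra.
Qed.

Lemma rescaled_flux_deriv n k p lam (u u' : R -> R) r :
  (0 < k)%nat -> (0 < n)%nat -> INR k < p -> 0 < r -> 0 < u r ->
  derivable_pt_lim u r (u' r) ->
  derivable_pt_lim (flux n k u') r (- lam * r ^ (n - 1) * Rpower (u r) p) ->
  derivable_pt_lim (rescaled_flux n k u u') r
    ((lam * Rpower (u r * Rpower r (2 * INR k / (p - INR k))) (p - INR k)
      - INR k * rescaled_flux n k u u' r * ((INR n - 2 * INR k) / INR k - log_slope u u' r)) / r).
Proof.
  intros Hk Hn Hp Hr Hu Hu' Hw.
  set (K := INR k) in *. set (N := INR n).
  assert (HK : 0 < K) by (apply lt_0_INR; exact Hk).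
  assert (Hdecay : Rpower (u r * Rpower r (2 * K / (p - K))) (p - K)
    = r * r ^ (n - 1) * Rpower (u r) p * Rpower r (2 * K - N) / u r ^ k).
  { rewrite <- Rpower_mult_distr, Rpower_mult by (try apply Rpower_pos; lra).
    replace (2 * K / (p - K) * (p - K)) with (2 * K) by (field; lra).
    replace (r * r ^ (n - 1)) with (r ^ n) by (destruct n; [lia|simpl; rewrite Nat.sub_0_r; ring]).
    rewrite <- !Rpower_pow by lra. fold K N.
    replace (Rpower (u r) p) with (Rpower (u r) (p - K) * Rpower (u r) K)
      by (rewrite <- Rpower_plus; f_equal; ring).
    replace (Rpower r (2 * K)) with (Rpower r N * Rpower r (2 * K - N))
      by (rewrite <- Rpower_plus; f_equal; ring).
    field. apply Rgt_not_eq, Rpower_pos. }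
  eapply derivable_pt_lim_eq.
  - apply (derivable_pt_lim_div (fun y => - flux n k u' y * Rpower y (2 * K - N))
      (fun y => u y ^ k)).
    + apply derivable_pt_lim_mult;
        [apply derivable_pt_lim_opp, Hw|apply derivable_pt_lim_power, Hr].
    + apply (derivable_pt_lim_comp u (fun y => y ^ k)); [exact Hu'|apply derivable_pt_lim_pow].
    + apply pow_nonzero. lra.
  - rewrite Hdecay, Rpower_minus_1 by lra. unfold rescaled_flux, log_slope, Rsqr. fold K N.
    replace (u r ^ k) with (u r * u r ^ pred k) by (destruct k; [lia|reflexivity]).
    pose proof (pow_lt (u r) (pred k) Hu). field. repeat split; lra.
Qed.

Lemma log_slope_le_of_flux n k (u u' : R -> R) R1 :
  (0 < k)%nat -> (k <= n)%nat -> 0 < (INR n - 2 * INR k) / INR k -> 0 <= R1 ->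
  (forall r, R1 < r -> 0 < u r) ->
  (forall r, R1 < r -> u' r < 0) ->
  (forall r, R1 < r -> derivable_pt_lim u r (u' r)) ->
  (forall x y, 0 < x -> x <= y -> flux n k u' y <= flux n k u' x) ->
  forall r, R1 < r -> log_slope u u' r <= (INR n - 2 * INR k) / INR k.
Proof.
  intros Hk Hkn Hbet HR1 Hu Hneg Hd Hmono.
  apply (log_slope_le_of_mono u u' (n - k) k _ R1); try assumption.
  - rewrite minus_INR by exact Hkn. field. apply not_0_INR. lia.
  - intros r s Hr Hrs. specialize (Hmono r s ltac:(lra) Hrs).
    rewrite !flux_eq_neg in Hmono by (exact Hk || apply Hneg; lra). lra.
Qed.

Lemma exponent_bounds (n k : nat) (p : R) : (0 < k)%nat -> INR k < INR n / 2 ->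
  p > INR n * INR k / (INR n - 2 * INR k) ->
  INR k < p /\ 0 < 2 * INR k / (p - INR k) /\
  2 * INR k / (p - INR k) < (INR n - 2 * INR k) / INR k.
Proof.
  intros Hk HkN Hp. set (K := INR k) in *. set (N := INR n) in *.
  assert (HK : 0 < K) by (apply lt_0_INR; exact Hk).
  assert (HNK : N * K < p * (N - 2 * K)).
  { apply Rmult_lt_compat_r with (r := N - 2 * K) in Hp; [|lra].
    replace (N * K / (N - 2 * K) * (N - 2 * K)) with (N * K) in Hp by (field; lra). lra. }
  assert (HKp : K < p) by nra.
  split; [exact HKp|]. split; [apply Rdiv_lt_0_compat; lra|].
  apply Rmult_lt_reg_r with (r := K * (p - K)); [nra|].
  replace (2 * K / (p - K) * (K * (p - K))) with (2 * K * K) by (field; lra).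
  replace ((N - 2 * K) / K * (K * (p - K))) with ((N - 2 * K) * (p - K)) by (field; lra).
  nra.
Qed.

Theorem lemma2p3 (n k : nat) (p rho : R) (u : R -> R) :
  (3 <= n)%nat ->
  (1 < k)%nat ->
  INR k < INR n / 2 ->
  p > INR n * INR k / (INR n - 2 * INR k) ->
  rho > 0 ->
  solves_1_6 n k p rho u ->
  regular n u ->
  (forall eps, eps > 0 -> exists R0, forall r, r > R0 ->
     Rabs (u r * Rpower r (2 * INR k / (p - INR k))) < eps) ->
  exists M R0, forall r, r > R0 ->
     Rabs (u r) <= M * Rpower r ((2 * INR k - INR n) / INR k).
Proof.
  (* Neither [rho] nor the regularity of [u] enters the decay estimate. *)
  intros Hn Hk HkN Hp _ Hsol _ Hdec.
  assert (Hk0 : (0 < k)%nat) by lia.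
  assert (Hkn : (k <= n)%nat) by (apply INR_le; pose proof (pos_INR k); lra).
  destruct (exponent_bounds n k p Hk0 HkN Hp) as [HKp [Ha0 Hab]].
  pose proof Hsol as [_ [Hpos _]].
  destruct (flux_deriv_of_solves n k p rho u Hk0 Hsol) as [u' [Hu' Hflux]].
  assert (Hlam : 0 < INR k / C (n - 1) (k - 1))
    by (apply Rdiv_lt_0_compat; [apply lt_0_INR, Hk0|apply C_pos]).
  pose proof (flux_nonincreasing n k p _ u u' (Rlt_le _ _ Hlam) Hpos Hflux) as Hmono.
  destruct (deriv_eventually_neg n k u u' Hk0 Hpos
    (vanishes_of_Rpower_weighted u _ (Rlt_le _ _ Ha0) Hdec) Hu' Hmono) as [R1 [HR1 Hneg]].
  assert (HposR1 : forall r, R1 < r -> 0 < u r) by (intros r Hr; apply Hpos; lra).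
  assert (Hu'R1 : forall r, R1 < r -> derivable_pt_lim u r (u' r)) by (intros r Hr; apply Hu'; lra).
  destruct (u_le_Rpower_bet u u' (rescaled_flux n k u u') k p ((INR n - 2 * INR k) / INR k)
    (2 * INR k / (p - INR k)) (INR k / C (n - 1) (k - 1)) R1) as [M [R0 HM]];
    try assumption.
  - intros r Hr. apply rescaled_flux_eq_pow;
      [exact Hk0|exact Hkn|lra|apply HposR1, Hr|apply Hneg, Hr].
  - intros r Hr. apply rescaled_flux_deriv;
      [exact Hk0|lia|exact HKp|lra|apply HposR1, Hr|apply Hu'R1, Hr|apply Hflux; lra].
  - apply (log_slope_le_of_flux n k u u' R1); [exact Hk0|exact Hkn|lra|lra|assumption..].
  - exists M, (Rmax R0 R1). intros r Hr. pose proof (Rmax_l R0 R1). pose proof (Rmax_r R0 R1).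
    rewrite Rabs_right by (left; apply Hpos; lra).
    replace ((2 * INR k - INR n) / INR k) with (- ((INR n - 2 * INR k) / INR k))
      by (field; apply not_0_INR; lia).
    apply HM. lra.
Qed.
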